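(* Let $G$ be a simple, undirected, connected graph on $N\ge 2$ vertices with edge set $E$ and degrees $d_i$, and let $$\sigma^2=\frac{2}{N}\sum_{(i,j)\in E}\frac{1}{d_id_j}=\frac{\mathrm{tr}(P^2)}{N},\qquad \sigma\ge 0.$$ Then $$R^+(G)\ge N\left[\frac{1}{1+\frac{\sigma}{\sqrt{N-1}}}+\frac{(N-2)^2}{N-1-\frac{\sigma}{\sqrt{N-1}}}\right]+(N-1)^2.$$
   Context: $P=(p(v,w))$ is the $N\times N$ transition matrix of the simple random walk on $G$: $p(v,w)=1/d_v$ if $v,w$ are adjacent and $0$ otherwise. For vertices $i,j$, $R_{ij}$ denotes the effective resistance between $i$ and $j$ when every edge is a unit resistor. The additive degree-Kirchhoff index is $R^+(G)=\sum_{i<j}(d_i+d_j)R_{ij}$. *)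

From HB Require Import structures.
From mathcomp Require Import all_boot all_order all_algebra.
Set Implicit Arguments. Unset Strict Implicit. Unset Printing Implicit Defensive.
Import Order.TTheory GRing.Theory Num.Theory.
Local Open Scope ring_scope.

Definition simple_graph (n : nat) (e : rel 'I_n) : Prop :=
  symmetric e /\ irreflexive e.

Definition connected_graph (n : nat) (e : rel 'I_n) : Prop :=
  forall x y : 'I_n, connect e x y.

Definition deg (n : nat) (e : rel 'I_n) (v : 'I_n) : nat := #|[set w | e v w]|.

Definition laplacian (R : ringType) (n : nat) (e : rel 'I_n) : 'M[R]_n :=
  \matrix_(i, j) (if i == j then (deg e i)%:R else if e i j then -1 else 0).

Definition dvec (R : ringType) (n : nat) (i j : 'I_n) : 'rV[R]_n :=
  delta_mx 0 i - delta_mx 0 j.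

(* Effective resistance between i and j (unit resistors): the potential
   difference x_i - x_j of a potential x solving the Kirchhoff system
   x L = e_i - e_j (L symmetric); x is taken as (e_i - e_j) L^+ using the
   library's partial inverse pinvmx. *)
Definition eff_res (R : fieldType) (n : nat) (e : rel 'I_n) (i j : 'I_n) : R :=
  let x := dvec R i j *m pinvmx (laplacian R e) in
  x 0 i - x 0 j.

Definition add_deg_kirchhoff (R : fieldType) (n : nat) (e : rel 'I_n) : R :=
  \sum_(i < n) \sum_(j < n | (i < j)%N)
     ((deg e i)%:R + (deg e j)%:R) * eff_res R e i j.

Definition sigma2 (R : fieldType) (n : nat) (e : rel 'I_n) : R :=
  (2 / n%:R) * \sum_(i < n) \sum_(j < n | (i < j)%N && e i j)
                  ((deg e i)%:R * (deg e j)%:R)^-1.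

From HB Require Import structures.
From mathcomp Require Import all_boot all_order all_algebra.
From mathcomp Require Import ring lra.
Import Order.TTheory GRing.Theory Num.Theory.
Local Open Scope ring_scope.
Set Implicit Arguments. Unset Strict Implicit. Unset Printing Implicit Defensive.

(* With the Green form β(a, b) = a L^+ b^T and the centred vectors a_i = e_i - π,
   where π = d / 2m is the stationary distribution, one has
   R_ij = Φ_i + Φ_j - 2 β(a_i, a_j) with Φ_i = β(a_i, a_i); since Σ_i d_i a_i = 0,
   this gives R^+ = N Σ_i d_i Φ_i + 2m Σ_j Φ_j.  Cauchy-Schwarz for β yields
   Φ_j >= (1 - π_j)^2 / d_j, hence 2m Σ_j Φ_j >= (N - 1)^2.  For K = Σ_i d_i Φ_i,
   comparing β(b_i, b_i) with Σ_k b_ik^2 / 2 d_k for the test vectors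
   b_i = e_i L - c d_i a_i gives an inequality, quadratic in c, involving
   tr P^2 = N σ^2.  Optimising c gives K >= (N - 1)/2 + (N - 2)^2 / (2N(1 - σ^2))
   when N >= 3 (then tr P^2 < N), and this dominates the claimed bound because
   (tr P^2 - 1)(N - 1) >= 1: the N - 1 nontrivial eigenvalues of P sum to -1. *)

Lemma sum_indicator_mul (R : pzSemiRingType) (n : nat) (F : 'I_n -> R) (k : 'I_n) :
  \sum_j (k == j)%:R * F j = F k.
Proof.
rewrite (bigD1 k) //= eqxx mul1r big1 ?addr0 // => j.
by rewrite eq_sym => /negbTE ->; rewrite mul0r.
Qed.

Lemma sum_ltn_symmetrize (V : zmodType) (n : nat) (f : 'I_n -> 'I_n -> V) :
  (forall i, f i i = 0) ->
  \sum_(i < n) \sum_(j < n | (i < j)%N) (f i j + f j i) = \sum_i \sum_j f i j.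
Proof.
move=> f0; under eq_bigr do rewrite big_split /=.
rewrite big_split /= [X in _ + X](exchange_big_dep xpredT) //= -big_split /=.
apply: eq_bigr => i _; rewrite [RHS](bigID (fun j : 'I_n => (i < j)%N)) /=.
congr (_ + _); rewrite [RHS](bigID (fun j : 'I_n => (j < i)%N)) /=.
rewrite [X in _ = _ + X]big1 ?addr0.
  by apply: eq_bigl => j /=; case: ltngtP.
move=> j; rewrite -!leqNgt => /andP [ij ji].
by rewrite (@ord_inj _ j i) ?f0 //; apply/eqP; rewrite eqn_leq ij.
Qed.

Section CauchySchwarz.
Variables (R : realFieldType) (T : finType).

Lemma cauchy_schwarz_weighted (w x y : T -> R) : (forall p, 0 <= w p) ->
  (\sum_p w p * x p * y p) ^+ 2 <= (\sum_p w p * x p ^+ 2) * (\sum_p w p * y p ^+ 2).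
Proof.
move=> w_ge0.
have lagrange : 0 <= \sum_p \sum_q w p * w q * (x p * y q - x q * y p) ^+ 2.
  by apply: sumr_ge0 => p _; apply: sumr_ge0 => q _; rewrite mulr_ge0 ?sqr_ge0 ?mulr_ge0.
have expand : \sum_p \sum_q w p * w q * (x p * y q - x q * y p) ^+ 2 =
    \sum_p \sum_q (w p * x p ^+ 2) * (w q * y q ^+ 2)
  + \sum_p \sum_q (w q * x q ^+ 2) * (w p * y p ^+ 2)
  - 2 * \sum_p \sum_q (w p * x p * y p) * (w q * x q * y q).
  rewrite mulr_sumr -big_split -sumrB /=; apply: eq_bigr => p _.
  rewrite mulr_sumr -big_split -sumrB /=; apply: eq_bigr => q _; ring.
move: lagrange; rewrite expand [X in _ + X - _]exchange_big -!big_distrlr /= expr2; lra.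
Qed.

Lemma cauchy_schwarz_inv_weighted (w x y : T -> R) : (forall p, 0 < w p) ->
  (\sum_p x p * y p) ^+ 2 <= (\sum_p w p * x p ^+ 2) * (\sum_p y p ^+ 2 / w p).
Proof.
move=> w_gt0; have w_neq0 p : w p != 0 by rewrite gt_eqF.
have := cauchy_schwarz_weighted x (fun p => y p / w p) (fun p => ltW (w_gt0 p)).
by congr (_ ^+ 2 <= _ * _); apply: eq_bigr => p _; field.
Qed.

End CauchySchwarz.

Lemma bound_in_s_le_bound_in_sigma2 (R : realFieldType) (N s : R) :
  3 <= N -> 0 <= s -> 1 <= (N - 1) * s -> (N - 1) * s ^+ 2 < 1 ->
  (1 + s)^-1 + (N - 2) ^+ 2 / (N - 1 - s) <=
  (N - 1) / 2 + (N - 2) ^+ 2 / (2 * N * (1 - (N - 1) * s ^+ 2)).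
Proof.
have [t ->] : exists t, N = t + 1 by exists (N - 1); rewrite subrK.
rewrite !addrK (_ : t + 1 - 2 = t - 1); last by ring.
move=> N_ge3 s_ge0 ts_ge1 ts2_lt1; have t_ge2 : 2 <= t by lra.
have s_lt1 : s < 1 by nra.
pose F := (t ^+ 2 - t + 2) + (t ^+ 3 - 4 * t + 1) * s
  + (t ^+ 3 - 2 * t ^+ 2 - 2 * t + 1) * s ^+ 2 + t * (t + 1) * s ^+ 3.
have F_ge0 : 0 <= F.
  have lin_ge0 : 0 <= (t ^+ 3 - 4 * t + 1) * s.
    rewrite mulr_ge0 // (_ : t ^+ 3 - 4 * t + 1 = t * (t - 2) * (t + 2) + 1); last by ring.
    by rewrite addr_ge0 // !mulr_ge0 //; lra.
  have quad_ge0 : 0 <= t ^+ 2 * (t - 2) * s ^+ 2 by rewrite !mulr_ge0 ?sqr_ge0 //; lra.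
  have cub_ge0 : 0 <= t * (t + 1) * s ^+ 3 by rewrite !mulr_ge0 ?exprn_ge0 //; lra.
  have -> : F = (t ^+ 2 - t + 2) + (t ^+ 3 - 4 * t + 1) * s + t ^+ 2 * (t - 2) * s ^+ 2
     - 2 * (t * s ^+ 2) + s ^+ 2 + t * (t + 1) * s ^+ 3 by rewrite /F; ring.
  have := sqr_ge0 s; nra.
rewrite -subr_ge0.
have -> : t / 2 + (t - 1) ^+ 2 / (2 * (t + 1) * (1 - t * s ^+ 2))
     - ((1 + s)^-1 + (t - 1) ^+ 2 / (t - s))
   = (t * s - 1) * F / (2 * (t + 1) * (1 - t * s ^+ 2) * (1 + s) * (t - s)).
  by rewrite /F; field; rewrite !gt_eqF //; lra.
by rewrite divr_ge0 ?mulr_ge0 //; lra.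
Qed.

Section KirchhoffIndex.
Variables (R : realFieldType) (n : nat) (e : rel 'I_n).
Hypotheses (e_sym : symmetric e) (e_irr : irreflexive e).
Hypotheses (e_conn : connected_graph e) (n_ge2 : (2 <= n)%N).

Local Notation N := (n%:R : R).
Local Notation Lap := (laplacian R e).

Definition dg (i : 'I_n) : R := (deg e i)%:R.
Definition adj (i j : 'I_n) : R := (e i j)%:R.

Lemma adjC i j : adj i j = adj j i.
Proof. by rewrite /adj e_sym. Qed.

Lemma adjii i : adj i i = 0.
Proof. by rewrite /adj e_irr. Qed.

Lemma adj_ge0 i j : 0 <= adj i j.
Proof. exact: ler0n. Qed.

Lemma dgE i : dg i = \sum_j adj i j.
Proof.
rewrite /dg /adj /deg -natr_sum -sum1_card big_mkcond /=.
by congr _%:R; apply: eq_bigr => j _; rewrite inE; case: (e i j).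
Qed.

Lemma laplacianE i j : Lap i j = (i == j)%:R * dg i - adj i j.
Proof.
rewrite mxE; case: eqP => [->|_]; first by rewrite adjii mul1r subr0.
by rewrite mul0r sub0r /adj; case: (e i j); rewrite ?oppr0.
Qed.

Lemma laplacianC i j : Lap i j = Lap j i.
Proof. by rewrite !laplacianE adjC eq_sym; case: eqP => [->|]; rewrite ?mul0r. Qed.

Lemma connect_edge_invariant (T : Type) (c : 'I_n -> T) :
  (forall i j, e i j -> c i = c j) -> forall i j, c i = c j.
Proof.
move=> c_edge i j; have /connectP [p pth ->] := e_conn i j.
by elim: p i pth => [|k p IH] i //= /andP [/c_edge -> /IH].
Qed.

Lemma dg_gt0 i : 0 < dg i.
Proof.
have : (0 < #|predC1 i|)%N by rewrite cardC1 card_ord; case: n n_ge2 => [|[]].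
case/card_gt0P => j; rewrite !inE => ji.
have /connectP [[|k p] /= pth jE] := e_conn i j; first by rewrite jE eqxx in ji.
case/andP: pth => eik _; rewrite ltr0n; apply/card_gt0P; exists k; by rewrite inE.
Qed.

Lemma dg_neq0 i : dg i != 0.
Proof. by rewrite gt_eqF ?dg_gt0. Qed.

Definition dot (u v : 'rV[R]_n) : R := \sum_k u 0 k * v 0 k.

Lemma dotC u v : dot u v = dot v u.
Proof. by apply: eq_bigr => k _; rewrite mulrC. Qed.

Lemma dotBl u v w : dot (u - v) w = dot u w - dot v w.
Proof. by rewrite /dot -sumrB; apply: eq_bigr => k _; rewrite !mxE mulrBl. Qed.

Lemma dotZl (c : R) u w : dot (c *: u) w = c * dot u w.
Proof. by rewrite /dot mulr_sumr; apply: eq_bigr => k _; rewrite mxE mulrA. Qed.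

Lemma dotBr u v w : dot w (u - v) = dot w u - dot w v.
Proof. by rewrite !(dotC w) dotBl. Qed.

Lemma erowE i k : ('e_i : 'rV[R]_n) 0 k = (i == k)%:R.
Proof. by rewrite mxE eqxx eq_sym. Qed.

Lemma dot_erow i v : dot 'e_i v = v 0 i.
Proof. by rewrite /dot; under eq_bigr do rewrite erowE; apply: sum_indicator_mul. Qed.

Definition lapf (x y : 'rV[R]_n) : R := dot (x *m Lap) y.

Lemma lapfE x y : lapf x y = \sum_i \sum_j adj i j * (x 0 i * y 0 i - x 0 i * y 0 j).
Proof.
rewrite /lapf /dot; under eq_bigr do rewrite mxE mulr_suml.
rewrite exchange_big /=; apply: eq_bigr => k _; under eq_bigr do rewrite laplacianE.
transitivity (\sum_j (k == j)%:R * (x 0 k * dg k * y 0 j)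
              - \sum_j adj k j * (x 0 k * y 0 j)).
  by rewrite -sumrB; apply: eq_bigr => j _; ring.
rewrite sum_indicator_mul dgE mulr_sumr mulr_suml -sumrB.
by apply: eq_bigr => j _; ring.
Qed.

Lemma mul2_lapf x y :
  2 * lapf x y = \sum_i \sum_j adj i j * ((x 0 i - x 0 j) * (y 0 i - y 0 j)).
Proof.
rewrite mulr2n mulrDl mul1r {2}lapfE exchange_big /= lapfE -big_split /=.
apply: eq_bigr => i _; rewrite -big_split /=; apply: eq_bigr => j _.
by rewrite (adjC j i); ring.
Qed.

Lemma lapfC x y : lapf x y = lapf y x.
Proof.
apply: (@mulfI _ 2); rewrite ?pnatr_eq0 // !mul2_lapf.
by do 2![apply: eq_bigr => ? _]; rewrite [(x 0 _ - _) * _]mulrC.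
Qed.

Lemma lapf_ge0 x : 0 <= lapf x x.
Proof.
rewrite -(pmulr_rge0 _ (ltr0n R 2)) mul2_lapf.
by do 2![apply: sumr_ge0 => ? _]; rewrite mulr_ge0 ?adj_ge0 // -expr2 sqr_ge0.
Qed.

Lemma lapf_cauchy_schwarz x y : lapf x y ^+ 2 <= lapf x x * lapf y y.
Proof.
have pair_form (z z' : 'rV[R]_n) : \sum_(p : 'I_n * 'I_n)
    adj p.1 p.2 * (z 0 p.1 - z 0 p.2) * (z' 0 p.1 - z' 0 p.2) = 2 * lapf z z'.
  by rewrite mul2_lapf pair_bigA; apply: eq_bigr => p _; rewrite mulrA.
have sq_form (z : 'rV[R]_n) : \sum_(p : 'I_n * 'I_n)
    adj p.1 p.2 * (z 0 p.1 - z 0 p.2) ^+ 2 = 2 * lapf z z.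
  by rewrite -pair_form; apply: eq_bigr => p _; rewrite expr2 mulrA.
have := cauchy_schwarz_weighted (fun p : 'I_n * 'I_n => x 0 p.1 - x 0 p.2)
  (fun p => y 0 p.1 - y 0 p.2) (fun p => adj_ge0 p.1 p.2).
rewrite pair_form !sq_form; nra.
Qed.

Lemma lapf_eq0_const x : lapf x x = 0 -> forall i j, x 0 i = x 0 j.
Proof.
move=> q0; apply: connect_edge_invariant => i j eij.
have term_ge0 k l : 0 <= adj k l * ((x 0 k - x 0 l) * (x 0 k - x 0 l)).
  by rewrite mulr_ge0 ?adj_ge0 // -expr2 sqr_ge0.
have /esym := mul2_lapf x x; rewrite q0 mulr0.
move=> /(psumr_eq0P (fun k _ => sumr_ge0 _ (fun l _ => term_ge0 k l)))/(_ i isT).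
move=> /(psumr_eq0P (fun l _ => term_ge0 i l))/(_ j isT).
by rewrite /adj eij mul1r -expr2 => /eqP; rewrite sqrf_eq0 subr_eq0 => /eqP.
Qed.

Lemma lapf_le_deg x : lapf x x <= 2 * \sum_k dg k * x 0 k ^+ 2.
Proof.
rewrite -(ler_pM2l (ltr0n R 2)) mul2_lapf.
have -> : 2 * (2 * \sum_k dg k * x 0 k ^+ 2) =
    \sum_i \sum_j (2 * (adj i j * x 0 i ^+ 2) + 2 * (adj i j * x 0 j ^+ 2)).
  apply/esym; under eq_bigr do rewrite big_split /=.
  rewrite big_split /= [X in _ + X]exchange_big /=.
  under [X in _ + X]eq_bigr do under eq_bigr do rewrite adjC.
  have -> : \sum_i \sum_j 2 * (adj i j * x 0 i ^+ 2) = 2 * \sum_k dg k * x 0 k ^+ 2.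
    by rewrite mulr_sumr; apply: eq_bigr => i _; rewrite -mulr_sumr dgE mulr_suml.
  ring.
apply: ler_sum => i _; apply: ler_sum => j _.
rewrite -subr_ge0 (_ : _ - _ = adj i j * (x 0 i + x 0 j) ^+ 2); last by ring.
by rewrite mulr_ge0 ?adj_ge0 ?sqr_ge0.
Qed.

Definition zero_sum (a : 'rV[R]_n) := \sum_k a 0 k = 0.

Lemma zero_sumB a b : zero_sum a -> zero_sum b -> zero_sum (a - b).
Proof.
by rewrite /zero_sum => za zb; under eq_bigr do rewrite !mxE; rewrite sumrB za zb subrr.
Qed.

Lemma zero_sumZ (c : R) a : zero_sum a -> zero_sum (c *: a).
Proof. by rewrite /zero_sum => za; under eq_bigr do rewrite mxE; rewrite -mulr_sumr za mulr0. Qed.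

Lemma zero_sum_laplacian x : zero_sum (x *m Lap).
Proof.
rewrite /zero_sum; under eq_bigr do rewrite mxE; rewrite exchange_big big1 // => j _.
rewrite -mulr_sumr; under eq_bigr do rewrite laplacianE.
by rewrite sumrB sum_indicator_mul -dgE subrr mulr0.
Qed.

Definition pot (a : 'rV[R]_n) : 'rV[R]_n := a *m pinvmx Lap.
Definition green (a b : 'rV[R]_n) : R := dot a (pot b).

(* The columns of [cokermx Lap] lie in the kernel of the symmetric matrix
   [Lap], hence are constant by connectivity, and are thus killed by [a]. *)
Lemma pot_laplacian a : zero_sum a -> pot a *m Lap = a.
Proof.
move=> za; apply: mulmxKpV; rewrite submxE; apply/eqP/rowP => j.
pose z : 'rV[R]_n := \row_k cokermx Lap k j.
have : lapf z z = 0.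
  rewrite /lapf /dot big1 // => m _; rewrite !mxE.
  have -> : \sum_k z 0 k * Lap k m = (Lap *m cokermx Lap) m j.
    by rewrite mxE; apply: eq_bigr => k _; rewrite mxE laplacianC mulrC.
  by rewrite mulmx_coker mxE mul0r.
move/lapf_eq0_const => z_const; rewrite [LHS]mxE [RHS]mxE.
transitivity (\sum_k a 0 k * z 0 j).
  by apply: eq_bigr => k _; rewrite -(z_const k j) [z 0 k]mxE.
by rewrite -mulr_suml za mul0r.
Qed.

Lemma greenBl a b c : green (a - b) c = green a c - green b c.
Proof. exact: dotBl. Qed.

Lemma greenZl (k : R) a c : green (k *: a) c = k * green a c.
Proof. exact: dotZl. Qed.

Lemma greenBr a b c : green c (a - b) = green c a - green c b.
Proof. by rewrite /green /pot mulmxBl dotBr. Qed.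

Lemma green_lapf a b : zero_sum a -> green a b = lapf (pot a) (pot b).
Proof. by move=> za; rewrite /green -{1}(pot_laplacian za). Qed.

Lemma greenC a b : zero_sum a -> zero_sum b -> green a b = green b a.
Proof. by move=> za zb; rewrite !green_lapf // lapfC. Qed.

Lemma green_ge0 a : zero_sum a -> 0 <= green a a.
Proof. by move=> za; rewrite green_lapf // lapf_ge0. Qed.

Lemma green_laplacian x b : zero_sum b -> green (x *m Lap) b = dot x b.
Proof. by move=> zb; rewrite /green -/(lapf x (pot b)) lapfC /lapf pot_laplacian // dotC. Qed.

Lemma green_cauchy_schwarz a x : zero_sum a -> dot a x ^+ 2 <= green a a * lapf x x.
Proof.
move=> za; rewrite green_lapf // -[in dot a x](pot_laplacian za).
exact: lapf_cauchy_schwarz.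
Qed.

Definition vol : R := \sum_k dg k.

Lemma vol_gt0 : 0 < vol.
Proof.
rewrite /vol (bigD1 (Ordinal (ltnW n_ge2))) //= ltr_wpDr ?dg_gt0 //.
by apply: sumr_ge0 => i _; rewrite ltW ?dg_gt0.
Qed.

Lemma vol_neq0 : vol != 0.
Proof. by rewrite gt_eqF ?vol_gt0. Qed.

Definition statd (k : 'I_n) : R := dg k / vol.

Lemma sum_statd : \sum_k statd k = 1.
Proof. by rewrite -mulr_suml divff ?vol_neq0. Qed.

Definition centv (i : 'I_n) : 'rV[R]_n := 'e_i - \row_k statd k.

Lemma centvE i k : centv i 0 k = (i == k)%:R - statd k.
Proof. by rewrite !mxE eqxx eq_sym. Qed.

Lemma zero_sum_centv i : zero_sum (centv i).
Proof.
rewrite /zero_sum; under eq_bigr do rewrite centvE.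
rewrite sumrB sum_statd -[X in _ - X](sum_indicator_mul (fun _ => 1) i).
by apply/eqP; rewrite subr_eq0; apply/eqP/eq_bigr => k _; rewrite mulr1.
Qed.

Definition Phi (i : 'I_n) : R := green (centv i) (centv i).

Lemma eff_resE i j :
  eff_res R e i j = Phi i + Phi j - 2 * green (centv i) (centv j).
Proof.
have -> : eff_res R e i j = green (centv i - centv j) (centv i - centv j).
  have -> : centv i - centv j = 'e_i - 'e_j by rewrite opprB addrA subrK.
  by rewrite /green dotBl !dot_erow.
rewrite greenBl !(greenBr (centv i) (centv j)) (greenC (zero_sum_centv j) (zero_sum_centv i)) /Phi.
ring.
Qed.

Lemma sum_dg_dot_centv v : \sum_i dg i * dot (centv i) v = 0.
Proof.
under eq_bigr do rewrite /dot mulr_sumr.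
rewrite exchange_big big1 // => k _.
transitivity (\sum_i (k == i)%:R * (dg i * v 0 k) - \sum_i dg i * (statd k * v 0 k)).
  by rewrite -sumrB; apply: eq_bigr => i _; rewrite centvE eq_sym; ring.
by rewrite sum_indicator_mul -mulr_suml -/vol /statd; field; apply: vol_neq0.
Qed.

Definition dphi_sum : R := \sum_i dg i * Phi i.

Lemma add_deg_kirchhoffE : add_deg_kirchhoff R e = N * dphi_sum + vol * \sum_j Phi j.
Proof.
have eff_resC i j : eff_res R e i j = eff_res R e j i.
  by rewrite !eff_resE (greenC (zero_sum_centv _) (zero_sum_centv _)) [Phi i + _]addrC.
rewrite /add_deg_kirchhoff.
under eq_bigr do under eq_bigr do rewrite mulrDl [in X in _ + X]eff_resC.
rewrite (@sum_ltn_symmetrize _ _ (fun i j => dg i * eff_res R e i j)); last first.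
  by move=> i; rewrite eff_resE /Phi; ring.
under eq_bigr do under eq_bigr do rewrite eff_resE !mulrDr mulrN.
under eq_bigr do rewrite sumrB big_split /=.
rewrite sumrB big_split /=.
have cross0 : \sum_i \sum_j dg i * (2 * green (centv i) (centv j)) = 0.
  rewrite exchange_big big1 // => j _.
  rewrite (eq_bigr (fun i => 2 * (dg i * dot (centv i) (pot (centv j))))) => [|i _].
    by rewrite -mulr_sumr sum_dg_dot_centv mulr0.
  by rewrite /green; ring.
rewrite cross0 subr0; congr (_ + _).
  by rewrite mulr_sumr; apply: eq_bigr => i _; rewrite sumr_const card_ord mulr_natl.
by rewrite exchange_big mulr_sumr; apply: eq_bigr => j _; rewrite -mulr_suml mulrC.
Qed.

Lemma lapf_erow i : lapf 'e_i 'e_i = dg i.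
Proof. by rewrite /lapf dotC dot_erow -rowE mxE laplacianE eqxx adjii mul1r subr0. Qed.

Lemma phi_ge j : (1 - statd j) ^+ 2 / dg j <= Phi j.
Proof.
have := green_cauchy_schwarz 'e_j (zero_sum_centv j).
by rewrite dotC dot_erow centvE eqxx lapf_erow -/(Phi j) ler_pdivrMr ?dg_gt0.
Qed.

Lemma vol_sum_phi_ge : (N - 1) ^+ 2 <= vol * \sum_j Phi j.
Proof.
have := cauchy_schwarz_inv_weighted (fun _ => 1) (fun j => 1 - statd j) dg_gt0.
under eq_bigr do rewrite mul1r; under [\sum_j dg j * _]eq_bigr do rewrite expr1n mulr1.
rewrite sumrB sum_statd sumr_const card_ord => /le_trans; apply.
by rewrite ler_wpM2l ?(ltW vol_gt0) // ler_sum // => j _; apply: phi_ge.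
Qed.

Lemma sum_sq_div_dg_le_green b : zero_sum b -> \sum_k b 0 k ^+ 2 / dg k <= 2 * green b b.
Proof.
move=> zb; set q := \sum_k _.
pose z : 'rV[R]_n := \row_k (b 0 k / dg k).
have q_ge0 : 0 <= q by apply: sumr_ge0 => k _; rewrite divr_ge0 ?sqr_ge0 ?ltW ?dg_gt0.
have dot_bz : dot b z = q by apply: eq_bigr => k _; rewrite mxE mulrA -expr2.
have lapf_z : lapf z z <= 2 * q.
  suff <- : \sum_k dg k * z 0 k ^+ 2 = q by apply: lapf_le_deg.
  by apply: eq_bigr => k _; rewrite mxE; field; apply: dg_neq0.
have := green_cauchy_schwarz z zb; rewrite dot_bz => qq.
have := green_ge0 zb; nra.
Qed.

Definition bvec (c : R) (i : 'I_n) : 'rV[R]_n := 'e_i *m Lap - (c * dg i) *: centv i.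

Lemma zero_sum_bvec c i : zero_sum (bvec c i).
Proof. exact: zero_sumB (zero_sum_laplacian _) (zero_sumZ _ (zero_sum_centv i)). Qed.

Lemma bvecE c i k : bvec c i 0 k = Lap i k - c * dg i * ((i == k)%:R - statd k).
Proof. by rewrite /bvec -rowE !mxE eqxx eq_sym. Qed.

Lemma green_bvec c i : green (bvec c i) (bvec c i) =
  dg i - 2 * c * dg i * (1 - statd i) + c ^+ 2 * dg i ^+ 2 * Phi i.
Proof.
have zb := zero_sum_bvec c i; have zc := zero_sum_centv i.
have green_centv_bvec : green (centv i) (bvec c i) = (1 - statd i) - c * dg i * Phi i.
  by rewrite greenC // /bvec greenBl green_laplacian // dot_erow greenZl centvE eqxx.
rewrite {1}/bvec greenBl green_laplacian // dot_erow greenZl green_centv_bvec.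
rewrite bvecE laplacianE eqxx adjii /=; ring.
Qed.

Definition trP2 : R := \sum_i \sum_k adj i k / (dg i * dg k).

Lemma bvec_sq_div c i k : bvec c i 0 k ^+ 2 / (dg i * dg k) =
  (i == k)%:R * ((1 - c) ^+ 2 + 2 * (1 - c) * c * statd i) + c ^+ 2 * statd i * statd k
  - 2 * c * adj i k / vol + adj i k / (dg i * dg k).
Proof.
have v0 := vol_neq0; have di0 := dg_neq0 i; have dk0 := dg_neq0 k.
rewrite bvecE laplacianE /statd /adj.
case: (eqVneq i k) => [<-|_]; first by rewrite e_irr /=; field; apply/andP.
by case: (e i k) => /=; field; apply/and3P.
Qed.

Lemma sum_bvec_sq_div c : \sum_i \sum_k bvec c i 0 k ^+ 2 / (dg i * dg k) =
  N * (1 - c) ^+ 2 - c ^+ 2 + trP2.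
Proof.
have row_sum i : \sum_k bvec c i 0 k ^+ 2 / (dg i * dg k) =
    ((1 - c) ^+ 2 + 2 * (1 - c) * c * statd i) + c ^+ 2 * statd i - 2 * c * dg i / vol
    + \sum_k adj i k / (dg i * dg k).
  under eq_bigr do rewrite bvec_sq_div.
  rewrite big_split /= sumrB big_split /= sum_indicator_mul.
  by rewrite -mulr_sumr sum_statd mulr1 -mulr_suml -mulr_sumr -dgE.
rewrite (eq_bigr _ (fun i _ => row_sum i)) big_split sumrB !big_split /= -/trP2.
rewrite sumr_const card_ord -!mulr_sumr !sum_statd -mulr_suml -mulr_sumr -/vol.
by rewrite -[_ *+ n]mulr_natl; field; apply: vol_neq0.
Qed.

Lemma dphi_sum_quadratic_bound c :
  N * (1 - c) ^+ 2 - c ^+ 2 + trP2 <= 2 * N - 4 * c * (N - 1) + 2 * c ^+ 2 * dphi_sum.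
Proof.
have term i : (dg i)^-1 * (2 * green (bvec c i) (bvec c i)) =
    2 - 4 * c + 4 * c * statd i + 2 * c ^+ 2 * (dg i * Phi i).
  by rewrite green_bvec; field; apply: dg_neq0.
have -> : 2 * N - 4 * c * (N - 1) + 2 * c ^+ 2 * dphi_sum =
    \sum_i (dg i)^-1 * (2 * green (bvec c i) (bvec c i)).
  rewrite (eq_bigr _ (fun i _ => term i)) !big_split /= -!mulr_sumr sum_statd -/dphi_sum.
  by rewrite !sumr_const !card_ord -[(- _) *+ n]mulr_natl; ring.
rewrite -sum_bvec_sq_div; apply: ler_sum => i _.
have -> : \sum_k bvec c i 0 k ^+ 2 / (dg i * dg k) =
    (dg i)^-1 * \sum_k bvec c i 0 k ^+ 2 / dg k.
  by rewrite mulr_sumr; apply: eq_bigr => k _; rewrite invfM mulrCA.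
apply: ler_wpM2l; first by rewrite invr_ge0 ltW ?dg_gt0.
exact/sum_sq_div_dg_le_green/zero_sum_bvec.
Qed.

Lemma trP2_sigma2 : trP2 = N * sigma2 R e.
Proof.
rewrite /sigma2 mulrA mulrCA divff ?pnatr_eq0 -?lt0n ?(ltnW n_ge2) // mulr1.
rewrite /trP2 -(@sum_ltn_symmetrize _ _ (fun i j => adj i j / (dg i * dg j))); last first.
  by move=> i; rewrite adjii mul0r.
rewrite mulr_sumr; apply: eq_bigr => i _; rewrite big_mkcondr mulr_sumr.
apply: eq_bigr => j _; rewrite /adj (e_sym j i) (mulrC (dg j)) /dg.
by case: (e i j) => /=; ring.
Qed.

Lemma sum_statd_mul : \sum_i \sum_k statd i * statd k = 1.
Proof. by rewrite -big_distrlr /= sum_statd mulr1. Qed.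

Lemma sum_adj_div_vol : \sum_i \sum_k adj i k / vol = 1.
Proof.
rewrite -[RHS](divff vol_neq0) mulr_suml; apply: eq_bigr => i _.
by rewrite -mulr_suml -dgE.
Qed.

(* [ctrans i k] is the (i, k) entry of P - 1 π. *)
Definition ctrans (i k : 'I_n) : R := adj i k / dg i - statd k.

Lemma sum_ctrans_sq : \sum_i \sum_k dg i / dg k * ctrans i k ^+ 2 = trP2 - 1.
Proof.
have term i k : dg i / dg k * ctrans i k ^+ 2 =
    adj i k / (dg i * dg k) - 2 * (adj i k / vol) + statd i * statd k.
  have v0 := vol_neq0; have di0 := dg_neq0 i; have dk0 := dg_neq0 k.
  by rewrite /ctrans /statd /adj; case: (e i k) => /=; field; apply/and3P.
under eq_bigr do under eq_bigr do rewrite term.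
under eq_bigr do rewrite big_split sumrB /=.
rewrite big_split sumrB /= sum_statd_mul -/trP2.
have -> : \sum_i \sum_k 2 * (adj i k / vol) = 2.
  by rewrite -[RHS]mulr1 -sum_adj_div_vol mulr_sumr; apply: eq_bigr => i _; rewrite mulr_sumr.
ring.
Qed.

Lemma sum_centv_sq : \sum_i \sum_k centv k 0 i ^+ 2 / (dg i / dg k) = N - 1.
Proof.
have term i k : centv k 0 i ^+ 2 / (dg i / dg k) =
    (i == k)%:R * (1 - 2 * statd i) + statd i * statd k.
  have v0 := vol_neq0; have di0 := dg_neq0 i; have dk0 := dg_neq0 k.
  rewrite centvE /statd; case: (eqVneq k i) => [->|_] /=; field.
    exact/andP.
  exact/and3P.
under eq_bigr do under eq_bigr do rewrite term.
under eq_bigr do rewrite big_split /= sum_indicator_mul.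
rewrite big_split /= sum_statd_mul sumrB sumr_const card_ord -mulr_sumr sum_statd.
ring.
Qed.

Lemma sum_ctrans_centv : \sum_i \sum_k ctrans i k * centv k 0 i = -1.
Proof.
have term i k : ctrans i k * centv k 0 i =
    statd i * statd k - adj i k / vol - (i == k)%:R * statd k.
  have v0 := vol_neq0; have di0 := dg_neq0 i; have dk0 := dg_neq0 k.
  rewrite centvE /ctrans /statd; case: (eqVneq k i) => [->|_] /=.
    by rewrite adjii; field; apply/andP.
  by field; apply/andP.
under eq_bigr do under eq_bigr do rewrite term.
under eq_bigr do rewrite !sumrB sum_indicator_mul.
rewrite !sumrB sum_statd_mul sum_adj_div_vol sum_statd.
ring.
Qed.

Lemma trP2_lower : 1 <= (trP2 - 1) * (N - 1).
Proof.
have w_gt0 (p : 'I_n * 'I_n) : 0 < dg p.1 / dg p.2 by rewrite divr_gt0 ?dg_gt0.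
have := cauchy_schwarz_inv_weighted (fun p => ctrans p.1 p.2) (fun p => centv p.2 0 p.1) w_gt0.
rewrite -(pair_bigA _ (fun i k => ctrans i k * centv k 0 i)) sum_ctrans_centv.
rewrite -(pair_bigA _ (fun i k => dg i / dg k * ctrans i k ^+ 2)) sum_ctrans_sq.
by rewrite -(pair_bigA _ (fun i k => centv k 0 i ^+ 2 / (dg i / dg k))) sum_centv_sq sqrrN expr1n.
Qed.

Lemma sigma2_ge0 : 0 <= sigma2 R e.
Proof.
have trP2_ge0 : 0 <= trP2.
  apply: sumr_ge0 => i _; apply: sumr_ge0 => k _.
  by rewrite divr_ge0 ?adj_ge0 ?mulr_ge0 ?ltW ?dg_gt0.
by move: trP2_ge0; rewrite trP2_sigma2 pmulr_rge0 // ltr0n ltnW.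
Qed.

Lemma trP2_le_sum_inv_dg : trP2 <= \sum_i (dg i)^-1.
Proof.
have split_inv i : (dg i)^-1 = \sum_k adj i k / dg i ^+ 2.
  by rewrite -mulr_suml -dgE; field; apply: dg_neq0.
have -> : \sum_i (dg i)^-1 = \sum_i \sum_k (adj i k / dg i ^+ 2 + adj i k / dg k ^+ 2) / 2.
  under [RHS]eq_bigr do rewrite -mulr_suml big_split /= -split_inv.
  rewrite -mulr_suml big_split /= [X in _ + X]exchange_big /=.
  have -> : \sum_k \sum_i adj i k / dg k ^+ 2 = \sum_k (dg k)^-1.
    by apply: eq_bigr => k _; rewrite split_inv; apply: eq_bigr => i _; rewrite adjC.
  by field.
apply: ler_sum => i _; apply: ler_sum => k _.
have di := dg_gt0 i; have dk := dg_gt0 k.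
rewrite -subr_ge0 (_ : _ - _ = adj i k * (dg i - dg k) ^+ 2 / (2 * dg i ^+ 2 * dg k ^+ 2)).
  by rewrite divr_ge0 ?(mulr_ge0 (adj_ge0 i k) (sqr_ge0 _)) // !mulr_ge0 ?sqr_ge0.
by field; apply/andP; split; apply: lt0r_neq0.
Qed.

Lemma deg1_neighbor_uniq x y z : deg e x = 1%N -> e x y -> e x z -> y = z.
Proof.
move=> /eqP /cards1P [w Nx] exy exz.
have : y \in [set u | e x u] by rewrite inE.
have : z \in [set u | e x u] by rewrite inE.
by rewrite Nx !inE => /eqP -> /eqP ->.
Qed.

(* If every degree is 1, the two ends of an edge form a connected component. *)
Lemma exists_deg_ge2 : (3 <= n)%N -> exists i, (2 <= deg e i)%N.
Proof.
move=> n_ge3; apply/existsP; apply: contraT => /existsPn deg_lt2.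
have deg1 k : deg e k = 1%N.
  by have := deg_lt2 k; have := dg_gt0 k; rewrite ltr0n; case: (deg e k) => [|[]].
have nb_uniq x y z : e x y -> e x z -> y = z by exact: deg1_neighbor_uniq (deg1 x).
pose i : 'I_n := Ordinal (ltnW n_ge2).
have /card_gt0P [j] : (0 < deg e i)%N by rewrite deg1.
rewrite inE => eij; have eji : e j i by rewrite e_sym.
have closed x y : e x y -> (x \in [set i; j]) = (y \in [set i; j]).
  move=> exy; have eyx : e y x by rewrite e_sym.
  rewrite !inE; case: (eqVneq x i) => [xi|xi].
    by rewrite xi in exy; rewrite (nb_uniq _ _ _ exy eij) eqxx orbT.
  case: (eqVneq x j) => [xj|xj].
    by rewrite xj in exy; rewrite (nb_uniq _ _ _ exy eji) eqxx.
  case: (eqVneq y i) => [yi|_].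
    by rewrite yi in eyx; rewrite (nb_uniq _ _ _ eyx eij) eqxx in xj.
  by case: (eqVneq y j) => [yj|//]; rewrite yj in eyx; rewrite (nb_uniq _ _ _ eyx eji) eqxx in xi.
have all_in k : k \in [set i; j] by rewrite (connect_edge_invariant closed k i) set21.
have : (#|[set: 'I_n]| <= #|[set i; j]|)%N.
  by apply/subset_leq_card/subsetP => k _; apply: all_in.
by rewrite cardsT card_ord cards2 => /(leq_trans n_ge3); case: (i != j).
Qed.

Lemma trP2_lt_n : (3 <= n)%N -> trP2 < N.
Proof.
move=> n_ge3; apply: le_lt_trans trP2_le_sum_inv_dg _.
have [i0 deg_i0] := exists_deg_ge2 n_ge3.
have inv_le1 i : (dg i)^-1 <= 1.
  by rewrite invr_le1 ?unitfE ?dg_neq0 // ?dg_gt0 // ler1n -(ltr0n R) dg_gt0.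
have inv_i0 : (dg i0)^-1 <= 2^-1 by rewrite lef_pV2 ?posrE ?dg_gt0 // ler_nat.
rewrite (bigD1 i0) //=.
have : \sum_(i | i != i0) (dg i)^-1 <= \sum_(i | i != i0) 1 by apply: ler_sum => i _.
rewrite sumr_const cardC1 card_ord.
have -> : N = 1 *+ n.-1 + 1 by rewrite natr1 prednK // ltnW.
lra.
Qed.

Lemma sigma2_lt1 : (3 <= n)%N -> sigma2 R e < 1.
Proof.
move=> n_ge3; have N_gt0 : 0 < N by rewrite ltr0n ltnW.
by have := trP2_lt_n n_ge3; rewrite trP2_sigma2 -[X in _ < X]mulr1 ltr_pM2l.
Qed.

(* The choice of [c] optimises [dphi_sum_quadratic_bound]. *)
Lemma dphi_sum_ge_sigma2 : (3 <= n)%N ->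
  (N - 1) / 2 + (N - 2) ^+ 2 / (2 * N * (1 - sigma2 R e)) <= dphi_sum.
Proof.
move=> n_ge3; have v_lt1 := sigma2_lt1 n_ge3; set v := sigma2 R e in v_lt1 *.
have N_ge3 : 3 <= N by rewrite (ler_nat R 3 n).
pose c := N * (1 - v) / (N - 2).
have c_gt0 : 0 < c by rewrite divr_gt0 ?mulr_gt0 //; lra.
have := dphi_sum_quadratic_bound c; rewrite trP2_sigma2 -/v.
have -> : N * (1 - c) ^+ 2 - c ^+ 2 + N * v = 2 * N - 4 * c * (N - 1)
    + 2 * c ^+ 2 * ((N - 1) / 2 + (N - 2) ^+ 2 / (2 * N * (1 - v))).
  by rewrite /c; field; rewrite !gt_eqF //; lra.
by rewrite lerD2l ler_pM2l // mulr_gt0 // exprn_gt0.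
Qed.

Lemma dphi_sum_ge (s : R) : 0 <= s -> (N - 1) * s ^+ 2 = sigma2 R e ->
  (1 + s)^-1 + (N - 2) ^+ 2 / (N - 1 - s) <= dphi_sum.
Proof.
move=> s_ge0 s_sq; have := trP2_lower; rewrite trP2_sigma2 -s_sq => lower.
have [n_ge3 | n_lt3] := leqP 3 n.
  have N_ge3 : 3 <= N by rewrite (ler_nat R 3 n).
  have ts_ge1 : 1 <= (N - 1) * s.
    have ts_ge0 : 0 <= (N - 1) * s by rewrite mulr_ge0 //; lra.
    have : 0 <= N * (((N - 1) * s) ^+ 2 - 1) by nra.
    rewrite pmulr_rge0 ?subr_ge0; [nra | lra].
  have ts2_lt1 : (N - 1) * s ^+ 2 < 1 by rewrite s_sq sigma2_lt1.
  apply: le_trans (bound_in_s_le_bound_in_sigma2 N_ge3 s_ge0 ts_ge1 ts2_lt1) _.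
  by rewrite s_sq dphi_sum_ge_sigma2.
have N2 : N = 2 by rewrite (_ : n = 2%N) //; apply/eqP; rewrite eqn_leq -ltnS n_lt3.
rewrite N2 subrr expr0n mul0r addr0 in lower *.
have s_ge1 : 1 <= s by nra.
have := dphi_sum_quadratic_bound 1; rewrite trP2_sigma2 -s_sq N2 => quad.
apply: (@le_trans _ _ 2^-1); first by rewrite lef_pV2 ?posrE; lra.
lra.
Qed.

End KirchhoffIndex.

Theorem theorem5 (R : rcfType) (n : nat) (e : rel 'I_n)
  (Hn : (2 <= n)%N) (Hsimple : simple_graph e) (Hconn : connected_graph e) :
  let N : R := n%:R in
  let sigma : R := Num.sqrt (sigma2 R e) in
  let s : R := sigma / Num.sqrt (N - 1) in
  N * ((1 + s)^-1 + (N - 2) ^+ 2 / (N - 1 - s)) + (N - 1) ^+ 2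
    <= add_deg_kirchhoff R e.
Proof.
case: Hsimple => e_sym e_irr; cbv zeta.
set N : R := n%:R; set s := Num.sqrt _ / _.
have N_gt1 : 1 < N by rewrite ltr1n.
have s_ge0 : 0 <= s by rewrite divr_ge0 ?sqrtr_ge0.
have s_sq : (N - 1) * s ^+ 2 = sigma2 R e.
  rewrite expr_div_n !sqr_sqrtr ?sigma2_ge0 ?subr_ge0 ?ltW //.
  by field; rewrite subr_eq0 gt_eqF.
rewrite add_deg_kirchhoffE // lerD //.
  by rewrite ler_wpM2l ?ler0n // dphi_sum_ge.
exact: vol_sum_phi_ge.
Qed.
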